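(* Let $p\ge1$ be an integer, and let $\bm U^0\in\mathbb V_h$ and $\bm U^1,\dots,\bm U^M\in\mathbb V_h$ satisfy the LCN-MP scheme $$(\bm I+\mathbb A^2)\frac{\bm U^1-\bm U^0}{\tau}+\mathbb D(\bm U^0)\frac{\bm U^1+\bm U^0}{2}=0,$$ $$(\bm I+\mathbb A^2)\frac{\bm U^{n+1}-\bm U^n}{\tau}+\mathbb D\Big(\frac{3\bm U^n-\bm U^{n-1}}{2}\Big)\frac{\bm U^{n+1}+\bm U^n}{2}=0,\quad n=1,\dots,M-1.$$ Then the discrete momentum $P^n=\|\bm U^n\|_h^2+|\bm U^n|_{2,h}^2$ satisfies $P^n=P^{n-1}=\cdots=P^0$ for all $0\le n\le M$.
   Context: $\Omega=[x_L,x_R]\times[y_L,y_R]$, $l_1=x_R-x_L$, $l_2=y_R-y_L$, $N_1,N_2$ even, $h_r=l_r/N_r$, grid points $x_{j_1}=x_L+j_1h_1$, $y_{j_2}=y_L+j_2h_2$, $0\le j_r\le N_r-1$; $\tau>0$. $\mathbb V_h$ is the space of grid functions $U_{j_1,j_2}$ periodic in both indices, identified with vectors $\bm U=(U_{0,0},U_{1,0},\dots,U_{N_1-1,0},U_{0,1},\dots,U_{N_1-1,N_2-1})^T$ ($j_1$ fastest). $\langle\bm U,\bm V\rangle_h=h_1h_2\sum_{j_1,j_2}U_{j_1,j_2}V_{j_1,j_2}$, $\|\bm U\|_h^2=\langle\bm U,\bm U\rangle_h$. For $r=1,2$, $\mu_r=2\pi/l_r$ and $g^{(1)}_{k}(x)=\frac1{N_1}\sum_{l=-N_1/2}^{N_1/2}\frac1{a_l}e^{\mathrm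 il\mu_1(x-x_k)}$ with $a_l=1$ for $|l|<N_1/2$, $a_{\pm N_1/2}=2$ (similarly $g^{(2)}_k(y)$ with $N_2,\mu_2,y_k$). $\bm D_s^x$ is the $N_1\times N_1$ matrix with entries $\frac{d^s}{dx^s}g^{(1)}_k(x_j)$ and $\bm D_s^y$ the $N_2\times N_2$ matrix with entries $\frac{d^s}{dy^s}g^{(2)}_k(y_j)$. With $\otimes$ the Kronecker product: $\mathbb A=\bm I_{N_2}\otimes\bm D_2^x+\bm D_2^y\otimes\bm I_{N_1}$, $\mathbb B=\bm I_{N_2}\otimes\bm D_3^x+\bm D_2^y\otimes\bm D_1^x$, $\mathbb L_h=\bm I_{N_2}\otimes\bm D_1^x+\bm D_1^y\otimes\bm I_{N_1}$, and for $\bm W\in\mathbb V_h$, $\mathbb D(\bm W)=\mathbb B+\mathbb L_h+\frac1{p+2}(\mathrm{diag}(\bm W^p)\mathbb L_h+\mathbb L_h\mathrm{diag}(\bm W^p))$, $\bm W^p$ the componentwise $p$-th power. $|\bm U|_{2,h}=\|\mathbb A\bm U\|_h$. *)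

From HB Require Import structures.
From mathcomp Require Import all_boot all_order all_algebra.
From mathcomp Require Import Rstruct.
From Stdlib Require Reals.
From Coquelicot Require Derive.

Set Implicit Arguments.
Unset Strict Implicit.
Unset Printing Implicit Defensive.
Import Order.TTheory GRing.Theory Num.Theory.
Local Open Scope ring_scope.

(* Kronecker product A (x) B, with the index of B running fastest:
   (A (x) B)_{(i2,i1),(j2,j1)} = A_{i2 j2} B_{i1 j1}, row index i2*n+i1. *)
Lemma kron_divP (m n : nat) (i : 'I_(m * n)) : ((i %/ n)%N < m)%N.
Proof.
case: n i => [|n] i; first by case: i => i; rewrite muln0.
by rewrite ltn_divLR // ltn_ord.
Qed.

Lemma kron_modP (m n : nat) (i : 'I_(m * n)) : ((i %% n)%N < n)%N.
Proof.
case: n i => [|n] i; first by case: i => i; rewrite muln0.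
by rewrite ltn_mod.
Qed.

Definition kq (m n : nat) (i : 'I_(m * n)) : 'I_m := Ordinal (kron_divP i).
Definition kr (m n : nat) (i : 'I_(m * n)) : 'I_n := Ordinal (kron_modP i).

Definition kron (m n : nat) (A : 'M[Rdefinitions.R]_m) (B : 'M[Rdefinitions.R]_n) : 'M[Rdefinitions.R]_(m * n) :=
  \matrix_(i, j) (A (kq i) (kq j) * B (kr i) (kr j)).

(* weight a_l, l = m - N/2 for m = 0..N : a = 2 iff |l| = N/2 *)
Definition aw (N m : nat) : Rdefinitions.R := if (m == 0)%N || (m == N)%N then 2 else 1.

(* The trigonometric cardinal function
   g_k(x) = 1/N sum_{l=-N/2}^{N/2} 1/a_l e^{i l mu (x - x_k)}.
   Its imaginary part vanishes identically (sin is odd in l and a_l is even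
   in l), so we write its (real) value. *)
Definition gfun (N : nat) (mu xk x : Rdefinitions.R) : Rdefinitions.R :=
  (N%:R)^-1 * \sum_(m < N.+1)
     (aw N m)^-1 * Rtrigo_def.cos ((m%:R - (N./2)%:R) * mu * (x - xk)).

Definition Dmat (N : nat) (xL l : Rdefinitions.R) (s : nat) : 'M[Rdefinitions.R]_N :=
  let h := l / N%:R in
  \matrix_(j, k) Derive.Derive_n
      (gfun N (2 * Rtrigo1.PI / l) (xL + (k : nat)%:R * h)) s (xL + (j : nat)%:R * h).

Section Ops.
Variables (N1 N2 : nat) (xL xR yL yR : Rdefinitions.R) (p : nat).
Let l1 := xR - xL.
Let l2 := yR - yL.
Definition Dx s := Dmat N1 xL l1 s.
Definition Dy s := Dmat N2 yL l2 s.

Definition Amat : 'M[Rdefinitions.R]_(N2 * N1) := kron 1%:M (Dx 2) + kron (Dy 2) 1%:M.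
Definition Bmat : 'M[Rdefinitions.R]_(N2 * N1) := kron 1%:M (Dx 3) + kron (Dy 2) (Dx 1).
Definition Lmat : 'M[Rdefinitions.R]_(N2 * N1) := kron 1%:M (Dx 1) + kron (Dy 1) 1%:M.

Definition diagpow (W : 'cV[Rdefinitions.R]_(N2 * N1)) : 'M[Rdefinitions.R]_(N2 * N1) :=
  diag_mx (\row_i (W i ord0 ^+ p)).

Definition Dop (W : 'cV[Rdefinitions.R]_(N2 * N1)) : 'M[Rdefinitions.R]_(N2 * N1) :=
  Bmat + Lmat + (p.+2%:R)^-1 *: (diagpow W *m Lmat + Lmat *m diagpow W).

Definition ip (U V : 'cV[Rdefinitions.R]_(N2 * N1)) : Rdefinitions.R :=
  (l1 / N1%:R) * (l2 / N2%:R) * \sum_i U i ord0 * V i ord0.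
Definition nrm2 U := ip U U.
Definition semi2sq U := nrm2 (Amat *m U).
Definition momentum U := nrm2 U + semi2sq U.
End Ops.

Arguments Dop : clear implicits.
Arguments diagpow : clear implicits.
Arguments ip : clear implicits.
Arguments nrm2 : clear implicits.
Arguments semi2sq : clear implicits.
Arguments momentum : clear implicits.

(* The s-th derivative of the cardinal function g_k is x |-> H_s (x - x_k) for a
   trigonometric sum H_s of parity (-1)^s, so the collocation matrices satisfy
   (D_s)^T = (-1)^s D_s.  Hence A is symmetric, while B, L and therefore every
   D(W) are skew-symmetric, whatever W is.  Pairing a step of the scheme with
   U^{n+1} + U^n kills the skew term, and the symmetric term
   (I + A^2)(U^{n+1} - U^n) yields (P^{n+1} - P^n) / (tau h_1 h_2). *)

From Stdlib Require Import Reals.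
From Coquelicot Require Import Coquelicot.
From HB Require Import structures.
From mathcomp Require Import all_boot all_order all_algebra.
From mathcomp Require Import Rstruct zify.

Set Implicit Arguments.
Unset Strict Implicit.
Unset Printing Implicit Defensive.
Import GRing.Theory Num.Theory.
Local Open Scope ring_scope.

Lemma is_derive_big_sum (I : Type) (r : seq I) (F : I -> R -> R) (dF : I -> R) x :
  (forall i, is_derive (F i) x (dF i)) ->
  is_derive (fun t => \sum_(i <- r) F i t) x (\sum_(i <- r) dF i).
Proof.
move=> dFi; elim: r => [|i r IHr].
  rewrite big_nil; apply: (@is_derive_ext R_AbsRing R_NormedModule (fun _ => 0)).
    by move=> t; rewrite big_nil.
  exact: is_derive_const.
rewrite big_cons.
apply: (@is_derive_ext R_AbsRing R_NormedModule (fun t => F i t + \sum_(j <- r) F j t)).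
  by move=> t; rewrite big_cons.
exact: is_derive_plus.
Qed.

Lemma cos_addPI2 (y : R) : cos (y + PI / 2) = - sin y.
Proof. by rewrite sin_cos RoppE opprK Rplus_comm. Qed.

Lemma is_derive_cos_affine (B phi t : R) :
  is_derive (fun x => cos (B * x + phi)) t (B * cos (B * t + phi + PI / 2)).
Proof.
rewrite cos_addPI2.
apply: (is_derive_comp cos (fun x => Rplus (Rmult B x) phi)); first exact: is_derive_cos.
by auto_derive; rewrite // Rmult_1_r.
Qed.

(* The argument of cos is parsed in R_scope, hence the RplusE/RealsE conversions. *)
Lemma cos_add_mulPI (z : R) s : cos (z + s%:R * PI) = (-1) ^+ s * cos z.
Proof.
elim: s => [|s IHs]; rewrite RplusE RmultE; first by rewrite mul0r addr0 expr0 mul1r.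
by rewrite -addn1 natrD mulrDl mul1r addrA -RplusE neg_cos IHs exprD expr1 mulrAC mulrN1.
Qed.

Lemma cos_opp_add_mulPI2 (y : R) s :
  cos (- y + s%:R * (PI / 2)) = (-1) ^+ s * cos (y + s%:R * (PI / 2)).
Proof.
rewrite -[in LHS]cos_neg Ropp_plus_distr Ropp_involutive.
have := cos_add_mulPI (y - s%:R * (PI / 2)) s.
rewrite !RealsE /= [in s%:R * PI](splitr PI) mulrDr addrA subrK.
by move=> ->; rewrite signrMK.
Qed.

Section CosineSum.
Variables (I : finType) (c b : I -> R).

Definition cos_sum (s : nat) (t : R) : R :=
  \sum_i c i * (b i ^+ s * cos (b i * t + s%:R * (PI / 2))).

Lemma is_derive_cos_sum s t : is_derive (cos_sum s) t (cos_sum s.+1 t).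
Proof.
apply: is_derive_big_sum => i.
have phaseS y : cos (y + s.+1%:R * (PI / 2)) = cos (y + s%:R * (PI / 2) + PI / 2).
  by rewrite !RealsE -addn1 natrD mulrDl mul1r addrA.
rewrite phaseS exprS [b i * _]mulrC -mulrA.
by apply: is_derive_scal; apply: is_derive_scal; apply: is_derive_cos_affine.
Qed.

Lemma Derive_n_cos_sum s t : Derive_n (cos_sum 0) s t = cos_sum s t.
Proof.
elim: s t => [|s IHs] t //=.
rewrite (Derive_ext _ (cos_sum s)) //.
exact/is_derive_unique/is_derive_cos_sum.
Qed.

Lemma cos_sum_opp s t : cos_sum s (- t) = (-1) ^+ s * cos_sum s t.
Proof.
rewrite /cos_sum mulr_sumr; apply: eq_bigr => i _.
by rewrite -Ropp_mult_distr_r cos_opp_add_mulPI2 (mulrCA (b i ^+ s)); apply: mulrCA.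
Qed.

End CosineSum.

Lemma gfun_cos_sum N mu xk x :
  gfun N mu xk x =
  cos_sum (fun m : 'I_N.+1 => N%:R^-1 * (aw N m)^-1)
          (fun m => (m%:R - (N./2)%:R) * mu) 0 (x - xk).
Proof.
rewrite /gfun /cos_sum mulr_sumr; apply: eq_bigr => m _.
by rewrite expr0 mul1r mulrA !RealsE mul0r addr0.
Qed.

Lemma Derive_n_gfun N mu xk s x :
  Derive_n (gfun N mu xk) s x =
  cos_sum (fun m : 'I_N.+1 => N%:R^-1 * (aw N m)^-1)
          (fun m => (m%:R - (N./2)%:R) * mu) s (x - xk).
Proof.
rewrite (Derive_n_ext _ _ _ _ (gfun_cos_sum N mu xk)).
by rewrite (Derive_n_comp_trans (cos_sum _ _ 0)) Derive_n_cos_sum.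
Qed.

Lemma trmx_Dmat N xL l s : (Dmat N xL l s)^T = (-1) ^+ s *: Dmat N xL l s.
Proof.
apply/matrixP => j k; rewrite !mxE !Derive_n_gfun.
by rewrite -[X in cos_sum _ _ _ X]Ropp_minus_distr cos_sum_opp.
Qed.

Section QuadraticForm.
Variables (F : numFieldType) (n : nat).
Implicit Types (S K : 'M[F]_n) (u v w : 'cV[F]_n).

Lemma trmx11 (x : 'M[F]_1) : x^T = x.
Proof. by apply/matrixP => i j; rewrite !ord1 mxE. Qed.

Lemma skew_quad_eq0 K w : K^T = - K -> w^T *m K *m w = 0.
Proof.
move=> K_skew; have := trmx11 (w^T *m K *m w).
rewrite !trmx_mul trmxK K_skew mulNmx mulmxN mulmxA => opp_eq.
have : (2 : F) *: (w^T *m K *m w) == 0 by rewrite scaler_nat mulr2n -{1}opp_eq addNr.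
by rewrite scaler_eq0 pnatr_eq0 => /eqP.
Qed.

Lemma sym_quad_diff S u v : S^T = S ->
  (u + v)^T *m S *m (u - v) = u^T *m S *m u - v^T *m S *m v.
Proof.
move=> S_sym.
have cross : v^T *m S *m u = u^T *m S *m v.
  by rewrite -[LHS]trmx11 !trmx_mul trmxK S_sym mulmxA.
rewrite [(u + v)^T]linearD /= !mulmxDl !mulmxBr cross.
by rewrite addrA subrK.
Qed.

Lemma skew_midpoint_quad_eq S K u v (t : F) :
  S^T = S -> K^T = - K -> t != 0 ->
  S *m (t *: (u - v)) + K *m (2^-1 *: (u + v)) = 0 ->
  u^T *m S *m u = v^T *m S *m v.
Proof.
move=> S_sym K_skew t_neq0 /(congr1 (mulmx (u + v)^T)).
rewrite mulmxDr mulmx0 !mulmxA -!scalemxAr (skew_quad_eq0 _ K_skew) scaler0 addr0.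
rewrite sym_quad_diff // => /eqP; rewrite scaler_eq0 (negbTE t_neq0) subr_eq0.
by move/eqP.
Qed.

End QuadraticForm.

Lemma trmx_Dmat_even N xL l s : ~~ odd s -> (Dmat N xL l s)^T = Dmat N xL l s.
Proof. by move=> s_even; rewrite trmx_Dmat -signr_odd (negbTE s_even) scale1r. Qed.

Lemma trmx_Dmat_odd N xL l s : odd s -> (Dmat N xL l s)^T = - Dmat N xL l s.
Proof. by move=> s_odd; rewrite trmx_Dmat -signr_odd s_odd scaleN1r. Qed.

Lemma trmx_kron m n (A : 'M[R]_m) (B : 'M[R]_n) : (kron A B)^T = kron A^T B^T.
Proof. by apply/matrixP => i j; rewrite !mxE. Qed.

Lemma kronNl m n (A : 'M[R]_m) (B : 'M[R]_n) : kron (- A) B = - kron A B.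
Proof. by apply/matrixP => i j; rewrite !mxE mulNr. Qed.

Lemma kronNr m n (A : 'M[R]_m) (B : 'M[R]_n) : kron A (- B) = - kron A B.
Proof. by apply/matrixP => i j; rewrite !mxE mulrN. Qed.

Section Operators.
Variables (N1 N2 : nat) (xL xR yL yR : R) (p : nat).
Local Notation A := (Amat N1 N2 xL xR yL yR).
Local Notation B := (Bmat N1 N2 xL xR yL yR).
Local Notation L := (Lmat N1 N2 xL xR yL yR).
Local Notation D := (Dop N1 N2 xL xR yL yR p).

Lemma trmx_Amat : A^T = A.
Proof. by rewrite linearD /= !trmx_kron !trmx1 !trmx_Dmat_even. Qed.

Lemma trmx_Lmat : L^T = - L.
Proof. by rewrite linearD /= !trmx_kron !trmx1 !trmx_Dmat_odd // kronNl kronNr opprD. Qed.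

Lemma trmx_Bmat : B^T = - B.
Proof.
rewrite linearD /= !trmx_kron trmx1 [(Dy _ _ _ _)^T]trmx_Dmat_even //.
by rewrite !trmx_Dmat_odd // !kronNr opprD.
Qed.

Lemma trmx_Dop W : (D W)^T = - D W.
Proof.
rewrite /Dop; move: trmx_Bmat trmx_Lmat; move: B L => B' L' trB trL.
rewrite !linearD !linearZ /= !trmx_mul trB trL /diagpow tr_diag_mx mulmxN mulNmx.
by congr (_ + _); rewrite addrC.
Qed.

Lemma momentumE U :
  momentum N1 N2 xL xR yL yR U =
  (xR - xL) / N1%:R * ((yR - yL) / N2%:R) * (U^T *m (1%:M + A *m A) *m U) ord0 ord0.
Proof.
have dot m (u v : 'cV[R]_m) : (u^T *m v) ord0 ord0 = \sum_i u i ord0 * v i ord0.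
  by rewrite mxE; apply: eq_bigr => i _; rewrite mxE.
rewrite /momentum /semi2sq /nrm2 /ip -mulrDr mulmxDr mulmx1 mulmxDl mxE.
have -> : U^T *m (A *m A) *m U = (A *m U)^T *m (A *m U).
  by rewrite trmx_mul trmx_Amat !mulmxA.
by rewrite !dot.
Qed.

Lemma momentum_step W u v (t : R) : t != 0 ->
  (1%:M + A *m A) *m (t *: (u - v)) + D W *m (2^-1 *: (u + v)) = 0 ->
  momentum N1 N2 xL xR yL yR u = momentum N1 N2 xL xR yL yR v.
Proof.
have S_sym : (1%:M + A *m A)^T = 1%:M + A *m A.
  by rewrite linearD /= trmx1 trmx_mul trmx_Amat.
by move=> t_neq0 /(skew_midpoint_quad_eq S_sym (trmx_Dop W) t_neq0) uv; rewrite !momentumE uv.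
Qed.

End Operators.

Theorem theorem3p1 (xL xR yL yR : Rdefinitions.R) (N1 N2 : nat) (tau : Rdefinitions.R) (p M : nat)
  (U : nat -> 'cV[Rdefinitions.R]_(N2 * N1)) :
  xL < xR -> yL < yR ->
  (0 < N1)%N -> (0 < N2)%N -> ~~ odd N1 -> ~~ odd N2 ->
  0 < tau -> (1 <= p)%N ->
  (1 <= M)%N ->
  (1%:M + Amat N1 N2 xL xR yL yR *m Amat N1 N2 xL xR yL yR) *m
      (tau^-1 *: (U 1%N - U 0%N))
    + Dop N1 N2 xL xR yL yR p (U 0%N) *m (2^-1 *: (U 1%N + U 0%N)) = 0 ->
  (forall n, (1 <= n)%N -> (n <= M - 1)%N ->
    (1%:M + Amat N1 N2 xL xR yL yR *m Amat N1 N2 xL xR yL yR) *m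
        (tau^-1 *: (U n.+1 - U n))
      + Dop N1 N2 xL xR yL yR p (2^-1 *: (3%:R *: U n - U n.-1))
          *m (2^-1 *: (U n.+1 + U n)) = 0) ->
  forall n, (n <= M)%N ->
    momentum N1 N2 xL xR yL yR (U n) = momentum N1 N2 xL xR yL yR (U 0%N).
Proof.
(* Neither the grid nor p nor the extrapolated argument of Dop matters. *)
move=> _ _ _ _ _ _ tau_gt0 _ _ scheme0 scheme.
have tauV_neq0 : tau^-1 != 0 by rewrite invr_eq0 lt0r_neq0.
have momentumS k : (k < M)%N ->
    momentum N1 N2 xL xR yL yR (U k.+1) = momentum N1 N2 xL xR yL yR (U k).
  case: k => [|k] k_lt; first exact: momentum_step tauV_neq0 scheme0.
  by apply: momentum_step tauV_neq0 (scheme k.+1 _ _) => //; lia.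
elim=> [|n IHn] n_le //.
by rewrite momentumS // IHn // ltnW.
Qed.
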